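(* Let $A,B$ be closed linear relations in $X^2$ such that $\{A,B\}$ is a dual pair with $B^*(0)\cap N(A^* )=\{0\}$ and $A^*(0)\cap N(B^* )=\{0\}$. Then $\dim N(1+B^*A^* )=\dim N(1+A^*B^* )$.
   Context: $X$ is a complex Hilbert space; linear relations are linear subspaces of $X^2=X\times X$. $T^*=\{(f,g):\langle g,x\rangle=\langle f,y\rangle\ \forall(x,y)\in T\}$; $T(0)=\{y:(0,y)\in T\}$; $N(T)=\{x:(x,0)\in T\}$. Closed relations $A,B$ form a dual pair if $A\subset B^*$ (equivalently $B\subset A^*$). Product: $CT=\{(x,z):\exists y,(x,y)\in T,(y,z)\in C\}$; $N(1+B^*A^* )=\{g:(g,-g)\in B^*A^*\}$, and similarly $N(1+A^*B^* )$. *)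

From HB Require Import structures.
From mathcomp Require Import all_boot all_order all_algebra.
From mathcomp Require Import complex.
From mathcomp Require Import reals.
Set Implicit Arguments. Unset Strict Implicit. Unset Printing Implicit Defensive.
Import Order.TTheory GRing.Theory Num.Theory.
Local Open Scope ring_scope.

Section Hilbert.
Variable R : realType.
Local Notation C := (R[i]).
Variable V : lmodType C.
Variable ip : V -> V -> C.   (* <x, y>, linear in the first argument *)

Definition hnorm (x : V) : R := Num.sqrt (complex.Re (ip x x)).

Definition hconverges (u : nat -> V) (x : V) : Prop :=
  forall e : R, 0 < e -> exists N : nat, forall n : nat, (N <= n)%N ->
    hnorm (u n - x) < e.

Definition hcauchy (u : nat -> V) : Prop :=
  forall e : R, 0 < e -> exists N : nat, forall m n : nat,
    (N <= m)%N -> (N <= n)%N -> hnorm (u m - u n) < e.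

Definition is_hilbert : Prop :=
  [/\ (forall (a : C) (x y z : V), ip (a *: x + y) z = a * ip x z + ip y z),
      (forall x y : V, ip y x = conjc (ip x y)),
      (forall x : V, 0 <= ip x x),
      (forall x : V, ip x x = 0 -> x = 0)
    & (forall u : nat -> V, hcauchy u -> exists x, hconverges u x)].

(* linear relations: subspaces of V x V, represented as binary predicates *)
Definition linrel := V -> V -> Prop.

Definition is_linrel (T : linrel) : Prop :=
  T 0 0 /\ forall (a : C) x y x' y', T x y -> T x' y' -> T (a *: x + x') (a *: y + y').

(* closed in V x V (product norm topology; sequential closedness) *)
Definition closed_rel (T : linrel) : Prop :=
  forall (u v : nat -> V) (x y : V), (forall n, T (u n) (v n)) ->
    hconverges u x -> hconverges v y -> T x y.

Definition adj (T : linrel) : linrel :=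
  fun f g => forall x y, T x y -> ip g x = ip f y.

Definition rel_comp (S T : linrel) : linrel :=
  fun x z => exists y, T x y /\ S y z.

Definition mulval (T : linrel) : V -> Prop := fun y => T 0 y.
Definition kerrel (T : linrel) : V -> Prop := fun x => T x 0.

(* N(1 + T) = {g : (g, -g) in T} *)
Definition ker_one_plus (T : linrel) : V -> Prop := fun g => T g (- g).

Definition lin_indep (b : V -> Prop) : Prop :=
  forall (s : seq V) (c : V -> C), uniq s -> (forall v, v \in s -> b v) ->
    \sum_(v <- s) c v *: v = 0 -> forall v, v \in s -> c v = 0.

Definition spans (S b : V -> Prop) : Prop :=
  forall x, S x -> exists (s : seq V) (c : V -> C),
    (forall v, v \in s -> b v) /\ x = \sum_(v <- s) c v *: v.

Definition hamel_basis (S b : V -> Prop) : Prop :=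
  (forall v, b v -> S v) /\ lin_indep b /\ spans S b.

(* dim S1 = dim S2: S1 and S2 have Hamel bases of the same cardinality *)
Definition same_dim (S1 S2 : V -> Prop) : Prop :=
  exists (b1 b2 : V -> Prop) (f : V -> V),
    [/\ hamel_basis S1 b1, hamel_basis S2 b2,
        (forall v, b1 v -> b2 (f v)),
        (forall v w, b1 v -> b1 w -> f v = f w -> v = w)
      & (forall w, b2 w -> exists2 v, b1 v & f v = w)].

End Hilbert.

(** Write [A'], [B'] for the adjoints.  The relation
    [W := {(g, y) : (g, y) ∈ A', (y, -g) ∈ B'}] is linear, its domain is
    [N(1 + B'A')] and its range is [N(1 + A'B')] (take [z = -g] in the
    definition of the latter).  The hypothesis [A'(0) ∩ N(B') = {0}] says
    exactly that [W] is single-valued and [B'(0) ∩ N(A') = {0}] that it is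
    injective, so [W] is the graph of a linear isomorphism between the two
    null spaces, which maps a Hamel basis of one onto a Hamel basis of the
    other. *)
From HB Require Import structures.
From mathcomp Require Import all_boot all_order all_algebra.
From mathcomp Require Import complex.
From mathcomp Require Import reals.
From mathcomp Require Import boolp classical_sets.
Set Implicit Arguments. Unset Strict Implicit. Unset Printing Implicit Defensive.
Import Order.TTheory GRing.Theory Num.Theory.
Local Open Scope classical_set_scope.
Local Open Scope ring_scope.

Section HamelBasis.
Variables (R : realType) (V : lmodType R[i]).

Lemma chain_bigcup_seq (F : set (set V)) : total_on F subset ->
  forall s : seq V, (forall v, v \in s -> (\bigcup_(X in F) X) v) ->
  s = [::] \/ exists2 X, F X & forall v, v \in s -> X v.
Proof.
move=> tot; elim=> [|x s IH] sF; first by left.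
right; have [X0 FX0 X0x] := sF x (mem_head _ _).
have [->|[X1 FX1 X1s]] := IH (fun v vs => sF v (mem_behead (s := x :: s) vs)).
  by exists X0 => // v; rewrite inE => /eqP ->.
have [X01|X10] := tot _ _ FX0 FX1.
  by exists X1 => // v; rewrite inE => /orP[/eqP ->|/X1s]; [exact: X01|].
by exists X0 => // v; rewrite inE => /orP[/eqP ->//|/X1s/X10].
Qed.

(* A maximal independent subset [b] of [S] spans it: otherwise some [x] of [S]
   outside the span could be added to [b]. *)
Lemma hamel_basis_exists (S : set V) : exists b, hamel_basis S b.
Proof.
pose P b := (forall v, b v -> S v) /\ lin_indep b.
have [b [[bS b_indep] b_max]] : exists b, P b /\ forall b', b `<` b' -> ~ P b'.
  apply: Zorn_bigcup => F FP tot; split.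
    by move=> v [X FX Xv]; exact: (FP X FX).1.
  move=> s c us sF s0 v vs.
  have [s_nil|[X FX Xs]] := chain_bigcup_seq tot sF; first by rewrite s_nil in vs.
  exact: (FP X FX).2 s c us Xs s0 v vs.
exists b; split=> //; split=> // x Sx; apply: contrapT => x_span.
have bx : ~ b x.
  move=> bx; apply: x_span; exists [:: x], (fun=> 1); split.
    by move=> v; rewrite inE => /eqP ->.
  by rewrite big_seq1 scale1r.
apply: (b_max (b `|` [set x])).
  by split; [move=> v bv; left | move/(_ x (or_intror erefl))].
split; first by move=> v [/bS|->].
move=> s c us sbx s0 v vs.
have sb w : w \in rem x s -> b w.
  rewrite (mem_rem_uniq _ us) inE => /andP[wx ws].
  by case: (sbx w ws) => // wx'; rewrite wx' eqxx in wx.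
have [xs|xs] := boolP (x \in s); last first.
  apply: (b_indep s c us) => // w ws; case: (sbx w ws) => // wx.
  by move: ws; rewrite wx (negbTE xs).
move: s0; rewrite (big_rem _ xs) /= => s0.
have [cx0|cx0] := eqVneq (c x) 0; last first.
  exfalso; apply: x_span; exists (rem x s), (fun w => - (c x)^-1 * c w).
  split=> //; under eq_bigr do rewrite -scalerA.
  rewrite -scaler_sumr; apply: (scalerI cx0).
  rewrite scalerA mulrN mulfV // scaleN1r.
  by rewrite -(addr0_eq s0) opprK.
move: s0; rewrite cx0 scale0r add0r => s0.
have [->//|vx] := eqVneq v x.
apply: (b_indep _ c (rem_uniq _ us) sb s0).
by rewrite (mem_rem_uniq _ us) inE vx vs.
Qed.

End HamelBasis.

Section LinearRelation.
Variables (R : realType) (V : lmodType R[i]).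
Implicit Types (W : linrel V) (x y : V).

Definition domrel W : set V := fun x => exists y, W x y.
Definition ranrel W : set V := fun y => exists x, W x y.

Lemma linrel_opp W x y : is_linrel W -> W x y -> W (- x) (- y).
Proof.
by move=> [W0 WD] Wxy; have := WD (-1) _ _ _ _ Wxy W0; rewrite !scaleN1r !addr0.
Qed.

Lemma linrel_sub W x y x' y' : is_linrel W -> W x y -> W x' y' ->
  W (x - x') (y - y').
Proof.
by move=> linW Wxy Wxy'; have := linW.2 1 _ _ _ _ Wxy (linrel_opp linW Wxy');
  rewrite !scale1r.
Qed.

Lemma linrel_sum W (I : eqType) (s : seq I) (c : I -> R[i]) (u v : I -> V) :
  is_linrel W -> (forall i, i \in s -> W (u i) (v i)) ->
  W (\sum_(i <- s) c i *: u i) (\sum_(i <- s) c i *: v i).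
Proof.
move=> [W0 WD]; elim: s => [|i s IH] Wuv; first by rewrite !big_nil.
rewrite !big_cons; apply: WD; first exact: Wuv (mem_head _ _).
by apply: IH => j js; apply: Wuv; rewrite inE js orbT.
Qed.

Lemma adj_linrel (ip : V -> V -> R[i]) W :
  (forall (a : R[i]) (x y z : V), ip (a *: x + y) z = a * ip x z + ip y z) ->
  is_linrel (adj ip W).
Proof.
move=> ipD; have ip0 z : ip 0 z = 0.
  by have := ipD (-1) 0 0 z; rewrite scaler0 addr0 mulN1r addNr.
split; first by move=> x y _; rewrite !ip0.
by move=> a x y x' y' Wxy Wxy' u v Wuv; rewrite !ipD (Wxy _ _ Wuv) (Wxy' _ _ Wuv).
Qed.

End LinearRelation.

Section LinearRelationIsomorphism.
Variables (R : realType) (V : lmodType R[i]) (W : linrel V).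
Hypotheses (linW : is_linrel W)
  (W_fun : forall y, W 0 y -> y = 0) (W_inj : forall x, W x 0 -> x = 0).

Lemma linrel_fun_eq x y y' : W x y -> W x y' -> y = y'.
Proof.
by move=> Wxy Wxy'; apply/eqP; rewrite -subr_eq0;
  apply/eqP/W_fun; rewrite -(subrr x); apply: linrel_sub.
Qed.

Lemma linrel_inj_eq x x' y : W x y -> W x' y -> x = x'.
Proof.
by move=> Wxy Wx'y; apply/eqP; rewrite -subr_eq0;
  apply/eqP/W_inj; rewrite -(subrr y); apply: linrel_sub.
Qed.

Definition linrel_fun x : V := xget 0 (W x).

Lemma linrel_funP x : domrel W x -> W x (linrel_fun x).
Proof. exact: xgetPex. Qed.

Lemma linrel_fun_inj x x' : domrel W x -> domrel W x' ->
  linrel_fun x = linrel_fun x' -> x = x'.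
Proof.
move=> /linrel_funP Wx /linrel_funP Wx' fxx'.
by apply: linrel_inj_eq Wx _; rewrite fxx'.
Qed.

Variable b : set V.
Hypothesis b_basis : hamel_basis (domrel W) b.

Let f := linrel_fun.
Let g w := xget 0 (fun v => b v /\ f v = w).

Let bW v : b v -> W v (f v).
Proof. by move=> /b_basis.1; exact: linrel_funP. Qed.

Let gK w : (f @` b) w -> b (g w) /\ f (g w) = w.
Proof.
by move=> [v bv fv]; apply: (@xgetPex _ 0 (fun v => b v /\ f v = w)); exists v.
Qed.

Let fK v : b v -> g (f v) = v.
Proof.
move=> bv; have [bg fg] := gK (ex_intro2 _ _ v bv erefl).
by apply: linrel_fun_inj fg; apply: b_basis.1.
Qed.

Lemma linrel_image_lin_indep : lin_indep (f @` b).
Proof.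
move=> s c us sb s0 w ws.
have Wgs : W (\sum_(v <- s) c v *: g v) (\sum_(v <- s) c v *: v).
  by apply: (linrel_sum _ _ (v := id)) => // v /sb/gK[/bW + fgv]; rewrite fgv.
rewrite {}s0 in Wgs.
have ug : uniq (map g s).
  rewrite map_inj_in_uniq // => v v' /sb/gK[_ fv] /sb/gK[_ fv'] gvv'.
  by rewrite -fv -fv' gvv'.
have gs0 : \sum_(v <- map g s) c (f v) *: v = 0.
  by rewrite big_map -[RHS](W_inj Wgs); apply: eq_big_seq => v /sb/gK[_ ->].
have [_ <-] := gK (sb w ws); apply: b_basis.2.1 ug _ gs0 _ (map_f g ws).
by move=> v /mapP[v' /sb/gK[bg _] ->].
Qed.

Lemma linrel_image_spans : spans (ranrel W) (f @` b).
Proof.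
move=> y [x Wxy]; have [s [c [sb x_sum]]] := b_basis.2.2 x (ex_intro _ y Wxy).
exists (map f s), (fun w => c (g w)); split.
  by move=> w /mapP[v vs ->]; exists v => //; exact: sb.
rewrite big_map; under eq_big_seq => v /sb/fK-> do [].
rewrite x_sum in Wxy.
exact: linrel_fun_eq Wxy (linrel_sum _ linW (fun v vs => bW (sb v vs))).
Qed.

End LinearRelationIsomorphism.

Lemma same_dim_linrel (R : realType) (V : lmodType R[i]) (W : linrel V) :
  is_linrel W -> (forall y, W 0 y -> y = 0) -> (forall x, W x 0 -> x = 0) ->
  same_dim (domrel W) (ranrel W).
Proof.
move=> linW W_fun W_inj; have [b b_basis] := hamel_basis_exists (domrel W).
exists b, (linrel_fun W @` b), (linrel_fun W); split=> //.
- split; first by move=> w [v /b_basis.1 bv <-]; exists v; apply: linrel_funP.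
  by split; [exact: linrel_image_lin_indep | exact: linrel_image_spans].
- by move=> v v' /b_basis.1 + /b_basis.1; apply: linrel_fun_inj.
Qed.

Theorem lemma2p4 (R : realType) (V : lmodType R[i]) (ip : V -> V -> R[i])
  (A B : linrel V) :
  is_hilbert ip ->
  is_linrel A -> is_linrel B ->
  closed_rel ip A -> closed_rel ip B ->
  (forall x y, A x y -> adj ip B x y) ->
  (forall y, mulval (adj ip B) y -> kerrel (adj ip A) y -> y = 0%R) ->
  (forall y, mulval (adj ip A) y -> kerrel (adj ip B) y -> y = 0%R) ->
  same_dim (ker_one_plus (rel_comp (adj ip B) (adj ip A)))
           (ker_one_plus (rel_comp (adj ip A) (adj ip B))).
Proof.
move=> [ipD _ _ _ _] _ _ _ _ _ BA_trivial AB_trivial.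
set P := adj ip A; set Q := adj ip B.
have linP : is_linrel P := adj_linrel A ipD.
have linQ : is_linrel Q := adj_linrel B ipD.
pose W g y := P g y /\ Q y (- g).
have linW : is_linrel W.
  split; first by split; [exact: linP.1 | rewrite oppr0; exact: linQ.1].
  move=> a g y g' y' [Pgy Qyg] [Pgy' Qyg']; split; first exact: linP.2.
  by rewrite opprD -scalerN; apply: linQ.2.
have W_fun y : W 0 y -> y = 0 by rewrite /W oppr0 => -[]; apply: AB_trivial.
have W_inj g : W g 0 -> g = 0.
  move=> [/(linrel_opp linP)]; rewrite oppr0 => Pg0 Q0g.
  by apply: oppr_inj; rewrite oppr0; apply: BA_trivial.
have -> : ker_one_plus (rel_comp P Q) = ranrel W.
  apply/funext => y; apply/propext; split=> [[z [Qyz Pzy]]|[g [Pgy Qyg]]].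
    exists (- z); split; last by rewrite opprK.
    by rewrite -[y]opprK; exact: linrel_opp linP Pzy.
  by exists (- g); split=> //; exact: linrel_opp linP Pgy.
have -> : ker_one_plus (rel_comp Q P) = domrel W by [].
exact: same_dim_linrel linW W_fun W_inj.
Qed.
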